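(* Let $\mathcal{G}\subseteq C(\mathbb{R},\mathbb{R})$ be nonempty. The following conditions are equivalent: (1) $\mathcal{K}_\mathcal{G}\subseteq\{\mathrm{CL}(E):E\in\mathrm{CL}(\mathbb{R})\}$; (2) there exist $h_1,h_2\in C(\mathbb{R},\mathbb{R}^* )$ such that $\mathcal{G}=\{g\in C(\mathbb{R},\mathbb{R}):h_1\le g\le h_2\}$.
   Context: $\mathbb{R}^*=\mathbb{R}\cup\{-\infty,\infty\}$ with its usual order topology; $C(\mathbb{R},\mathbb{R}^* )$ is the set of continuous functions $\mathbb{R}\to\mathbb{R}^*$, and $h\le g$ means $h(x)\le g(x)$ for all $x\in\mathbb{R}$. For a closed set $E\subseteq\mathbb{R}$, $\mathrm{CL}(E)$ denotes the family of all closed subsets of $E$. For $\mathcal{G}\subseteq C(\mathbb{R},\mathbb{R})$ let $R_\mathcal{G}=\{(f,E)\in C(\mathbb{R},\mathbb{R})\times\mathrm{CL}(\mathbb{R}):(\exists g\in\mathcal{G})\, f\restriction E=g\restriction E\}$; for $\mathcal{F}\subseteq C(\mathbb{R},\mathbb{R})$ put $E_\mathcal{G}(\mathcal{F})=\{E\in\mathrm{CL}(\mathbb{R}):(\forall f\in\mathcal{F})\,(f,E)\in R_\mathcal{G}\}$, and let $\mathcal{K}_\mathcal{G}=\{E_\mathcal{G}(\mathcal{F}):\mathcal{F}\subseteq C(\mathbb{R},\mathbb{R})\}$. *)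

From HB Require Import structures.
From mathcomp Require Import all_boot all_order all_algebra.
From mathcomp Require Import all_classical all_reals all_analysis.
Set Implicit Arguments. Unset Strict Implicit. Unset Printing Implicit Defensive.
Import Order.TTheory GRing.Theory Num.Theory.
Import numFieldNormedType.Exports.
Local Open Scope classical_set_scope.
Local Open Scope ring_scope.

Section Defs.
Variable R : realType.

Definition Cfun : set (R -> R) := [set f : R -> R | continuous f].

Definition CL (E : set R) : set (set R) := [set F | closed F /\ F `<=` E].

Definition RG (G : set (R -> R)) (f : R -> R) (E : set R) : Prop :=
  Cfun f /\ closed E /\ exists2 g, G g & forall x, E x -> f x = g x.

Definition EG (G : set (R -> R)) (F : set (R -> R)) : set (set R) :=
  [set E | closed E /\ forall f, F f -> RG G f E].

Definition KG (G : set (R -> R)) : set (set (set R)) :=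
  [set K | exists2 F, F `<=` Cfun & K = EG G F].
End Defs.

(* (2) => (1): for every F, E_G(F) = CL(E), where E is the closed set of
   points at which every f in F lies between h1 and h2; on E each f agrees
   with its clamp max(h1, min(f, h2)), which belongs to G.
   (1) => (2): write V y = {g y | g in G}.  Applying (1) to F = {f} shows that
   the contact set {y | f y \in V y} of any continuous f is closed and that f
   agrees there with a single member of G.  Consequently each V y is an
   interval (interpolate between two members of G and use the intermediate
   value theorem), h2 = sup V and h1 = inf V are continuous, and a continuous
   g with h1 <= g <= h2 meets V everywhere, so g agrees with a member of G on
   all of R. *)

From HB Require Import structures.
From mathcomp Require Import all_boot all_order all_algebra.
From mathcomp Require Import all_classical all_reals all_analysis.
From mathcomp Require Import lra.
Import Order.TTheory GRing.Theory Num.Theory.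
Import numFieldNormedType.Exports.
Set Implicit Arguments.
Unset Strict Implicit.
Unset Printing Implicit Defensive.

Local Open Scope classical_set_scope.
Local Open Scope ring_scope.

Section order_topology_continuity.
Context {X : topologicalType} {d} {T : orderTopologicalType d}.
Implicit Types (f u w : X -> T) (x : X).

Lemma cvg_near_gt {f x a} : f @ x --> f x -> (a < f x)%O ->
  \forall y \near x, (a < f y)%O.
Proof.
move=> fx ax; apply: (@filterS _ _ _ (f @^-1` `]a, +oo[%classic)).
  by move=> y; rewrite /= in_itv /= andbT.
apply: fx; apply: open_nbhs_nbhs.
by split; [exact: rray_open|rewrite /= in_itv /= ax].
Qed.

Lemma cvg_near_lt {f x b} : f @ x --> f x -> (f x < b)%O ->
  \forall y \near x, (f y < b)%O.
Proof.
move=> fx xb; apply: (@filterS _ _ _ (f @^-1` `]-oo, b[%classic)).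
  by move=> y; rewrite /= in_itv.
apply: fx; apply: open_nbhs_nbhs.
by split; [exact: lray_open|rewrite /= in_itv /= xb].
Qed.

Lemma near_bounds_cvg f x :
  (forall a, (a < f x)%O -> \forall y \near x, (a < f y)%O) ->
  (forall b, (f x < b)%O -> \forall y \near x, (f y < b)%O) -> f @ x --> f x.
Proof.
move=> lo hi U; rewrite /= itv_nbhsE => -[i [oi xi] iU].
apply: (@filterS _ _ _ (f @^-1` [set` i])) => [y /iU //|].
move: i oi xi {iU} => [[[]l|[]] [[]r|[]]] //= _; rewrite ?in_itv /= ?andbT.
- move=> /andP[/lo lx /hi xr].
  by apply: filterS2 lx xr => y ly yr; rewrite /= in_itv /= ly yr.
- by move=> /lo; apply: filterS => y ly; rewrite /= in_itv /= ly.
- by move=> /hi; apply: filterS => y yr; rewrite /= in_itv /= yr.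
- by move=> _; apply: nearW => y; rewrite /= in_itv.
Qed.

Lemma closed_le_continuous u w : continuous u -> continuous w ->
  closed [set x | (u x <= w x)%O].
Proof.
move=> uc wc; rewrite -openC openE => x /= /negP; rewrite -ltNge => wu.
rewrite /interior.
(* T need not be dense, so w x and u x may have no point strictly between. *)
have [[z /andP[wz zu]]|nobetween] := pselect (exists z, (w x < z < u x)%O).
  apply: filterS2 (cvg_near_lt (wc x) wz) (cvg_near_gt (uc x) zu) => y wy zy.
  by apply/negP; rewrite -ltNge (lt_trans wy zy).
apply: filterS2 (cvg_near_lt (wc x) wu) (cvg_near_gt (uc x) wu) => y wy uy uw.
by apply: nobetween; exists (w y); rewrite wy (lt_le_trans uy uw).
Qed.

End order_topology_continuity.

Section real_line.
Context {R : realType}.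

Lemma EFin_between (a b : \bar R) : (a < b)%E -> exists r : R, (a < r%:E < b)%E.
Proof.
case: a b => [a||] [b||] //= ab.
- by exists ((a + b) / 2); rewrite !lte_fin in ab *; apply/andP; split; lra.
- by exists (a + 1); rewrite ltry lte_fin andbT; lra.
- by exists (b - 1); rewrite ltNyr lte_fin; lra.
- by exists 0; rewrite ltNyr ltry.
Qed.

Lemma continuous_EFin (f : R -> R) :
  continuous f -> continuous (fun y => (f y)%:E).
Proof. by move=> fc y; apply: cvg_EFin; [exact: nearW|exact: fc]. Qed.

Lemma closed_dnbhs (A : set R) x :
  closed A -> (\forall y \near x^', A y) -> A x.
Proof.
by move=> cA Ax; apply: (@closed_cvg _ _ x^' _ id A cA Ax x); exact: nbhs_dnbhs.
Qed.

Lemma closed_set1R (y : R) : closed [set y].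
Proof.
exact: accessible_closed_set1 (hausdorff_accessible (@Rhausdorff R)) y.
Qed.

Lemma CL_set1 (E : set R) y : CL E [set y] <-> E y.
Proof.
by split=> [[_ /(_ y erefl)] //|Ey]; split=> [|_ -> //]; exact: closed_set1R.
Qed.

End real_line.

Section multifunction.
Context {R : realType}.
Implicit Types (V : R -> set R) (f g : R -> R).
Local Open Scope ereal_scope.

Definition selection V g := continuous g /\ forall y, V y (g y).

(* The properties of V y = {g y | g in G} that condition (1) provides. *)
Record admissible V : Prop := {
  closed_contact : forall f, continuous f -> closed [set y | V y (f y)];
  is_interval_values : forall x, is_interval (V x);
  selection_through : forall x s, V x s -> exists2 g, selection V g & g x = s }.

Definition vsup V x := ereal_sup (EFin @` V x).
Definition vinf V x := ereal_inf (EFin @` V x).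
Definition vopp V x := [set t | V x (- t)%R].

Lemma vsup_ge V x s : V x s -> s%:E <= vsup V x.
Proof. by move=> Vs; apply: ereal_sup_ubound; exists s. Qed.

Lemma vsup_gt V x a : a < vsup V x -> exists2 s, V x s & a < s%:E.
Proof. by move=> /ereal_sup_gt[_ [s Vs <-]]; exists s. Qed.

Section admissible_multifunction.
Variables (V : R -> set R) (g0 : R -> R).
Hypotheses (Vadm : admissible V) (g0V : selection V g0).

Lemma near_vsup_gt x a : a < vsup V x -> \forall y \near x, a < vsup V y.
Proof.
move=> /vsup_gt[s Vs lt_as]; have [g [gc gV] gx] := selection_through Vadm Vs.
have agx : a < (g x)%:E by rewrite gx.
have EFgc := continuous_EFin gc.
apply: filterS (cvg_near_gt (EFgc x) agx) => y agy.
exact: lt_le_trans agy (vsup_ge (gV y)).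
Qed.

Lemma near_vsup_lt x b : vsup V x < b -> \forall y \near x, vsup V y < b.
Proof.
have [g0c g0inV] := g0V.
move=> xb; have [c /andP[xc cb]] := EFin_between xb.
have notVc : ~ V x c by move=> /vsup_ge; rewrite leNgt xc.
have g0x_c : (g0 x < c)%R by rewrite -lte_fin (le_lt_trans (vsup_ge (g0inV x))).
have nearVc : \forall y \near x, ~ V y c.
  have : open (~` [set y | V y c]).
    apply: closed_openC.
    exact: (closed_contact Vadm (@cst_continuous _ _ c)).
  by rewrite openE; apply.
apply: filterS2 nearVc (cvg_near_lt (g0c x) g0x_c) => y nVc g0y.
apply: le_lt_trans cb; apply: ge_ereal_sup => _ [t Vt <-]; rewrite lee_fin.
rewrite leNgt; apply/negP => ct; apply: nVc.
by apply: (is_interval_values Vadm (g0inV y) Vt); rewrite !ltW.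
Qed.

Lemma vsup_continuous : continuous (vsup V).
Proof.
by move=> x; apply: near_bounds_cvg; [exact: near_vsup_gt|exact: near_vsup_lt].
Qed.

Lemma le_vsup_mem g y0 : continuous g -> (forall y, (g y)%:E <= vsup V y) ->
  (g0 y0 < g y0)%R -> V y0 (g y0).
Proof.
have [g0c g0inV] := g0V.
move=> gc gV g0g.
(* f touches g only at y0 and stays above g0 near y0; by convexity f meets V
   on a punctured neighbourhood of y0, hence at y0 as its contact set is
   closed. *)
pose f y := (g y - `|y - y0|)%R.
have fc : continuous f.
  move=> y; apply: cvgB; first exact: gc.
  by apply: cvg_norm; apply: cvgB; [exact: cvg_id|exact: cvg_cst].
have fy0 : f y0 = g y0 by rewrite /f subrr normr0 subr0.
have near_g0f : \forall y \near y0, (g0 y < f y)%R.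
  have hc : continuous (fun y => f y - g0 y)%R.
    by move=> y; apply: cvgB; [exact: fc|exact: g0c].
  have hy0 : (0 < f y0 - g0 y0)%R by rewrite fy0 subr_gt0.
  by apply: filterS (cvg_near_gt (hc y0) hy0) => y; rewrite subr_gt0.
rewrite -fy0; apply: (@closed_dnbhs _ [set y | V y (f y)]).
  exact: (closed_contact Vadm fc).
apply: filterS2 (nbhs_dnbhs near_g0f) (nbhs_dnbhs_neq y0) => y g0f yy0.
have /vsup_gt[s Vs fs] : (f y)%:E < vsup V y.
  apply: lt_le_trans (gV y).
  by rewrite lte_fin /f ltrBlDr ltrDl normr_gt0 subr_eq0.
by apply: (is_interval_values Vadm (g0inV y) Vs); rewrite !ltW.
Qed.

End admissible_multifunction.

Lemma admissible_vopp V : admissible V -> admissible (vopp V).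
Proof.
move=> Vadm; split.
- move=> f fc; apply: (closed_contact Vadm (f := fun y => - f y)%R).
  by move=> y; apply: cvgN; exact: fc.
- move=> x a b Va Vb c /andP[ac cb].
  by apply: (is_interval_values Vadm Vb Va); rewrite !lerN2 ac cb.
- move=> x s Vs; have [g [gc gV] gx] := selection_through Vadm Vs.
  exists (fun y => - g y)%R; last by rewrite gx opprK.
  by split=> y; [apply: cvgN; exact: gc|rewrite /vopp /= opprK].
Qed.

Lemma selection_vopp V g :
  selection V g -> selection (vopp V) (fun y => - g y)%R.
Proof.
by move=> [gc gV]; split=> y; [apply: cvgN; exact: gc|rewrite /vopp /= opprK].
Qed.

Lemma vinfE V x : vinf V x = - vsup (vopp V) x.
Proof.
rewrite /vinf ereal_infEN /vsup; congr (- ereal_sup _).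
apply/seteqP; split => [_ [_ [t Vt <-] <-]|_ [t Vt <-]].
  by exists (- t)%R; rewrite /vopp /= ?opprK.
by exists (- t)%R%:E; [exists (- t)%R|rewrite EFinN oppeK].
Qed.

Lemma vinf_continuous V g0 :
  admissible V -> selection V g0 -> continuous (vinf V).
Proof.
move=> Vadm g0V; have -> : vinf V = fun x => - vsup (vopp V) x.
  by apply/funext => x; exact: vinfE.
move=> x; apply: continuous_comp; last exact: oppe_continuous.
exact: (vsup_continuous (admissible_vopp Vadm) (selection_vopp g0V)).
Qed.

Lemma between_vinf_vsup_mem V g0 g :
  admissible V -> selection V g0 -> continuous g ->
  (forall y, vinf V y <= (g y)%:E /\ (g y)%:E <= vsup V y) ->
  forall y, V y (g y).
Proof.
move=> Vadm g0V gc gV y; case: (ltgtP (g0 y) (g y)) => [g0g|gg0|<-].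
- by apply: (le_vsup_mem Vadm g0V gc) => // z; have [] := gV z.
- have gNc : continuous (fun z => - g z)%R by move=> z; apply: cvgN; exact: gc.
  have := le_vsup_mem (admissible_vopp Vadm) (selection_vopp g0V) gNc (y0 := y).
  rewrite /vopp /= opprK; apply; last by rewrite ltrN2.
  by move=> z; rewrite EFinN -leeNl -vinfE; have [] := gV z.
- by case: g0V.
Qed.

End multifunction.

Section band.
Context {R : realType}.
Variables (h1 h2 : R -> \bar R).
Hypotheses (h1c : continuous h1) (h2c : continuous h2).
Local Open Scope ereal_scope.

Definition band : set (R -> R) :=
  [set g | continuous g /\ forall x, h1 x <= (g x)%:E /\ (g x)%:E <= h2 x].

Definition band_domain (F : set (R -> R)) : set R :=
  [set x | forall f, F f -> h1 x <= (f x)%:E /\ (f x)%:E <= h2 x].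

Lemma closed_band_domain F : F `<=` @Cfun R -> closed (band_domain F).
Proof.
move=> FC; have -> : band_domain F = \bigcap_(f in F)
    ([set x | h1 x <= (f x)%:E] `&` [set x | (f x)%:E <= h2 x]).
  by apply/seteqP; split => x Fx f /Fx [].
apply: closed_bigI => f /FC fc; have EFfc := continuous_EFin fc.
by apply: closedI; apply: closed_le_continuous.
Qed.

Variable g0 : R -> R.
Hypothesis g0band : band g0.

Lemma band_clamp f : continuous f -> exists2 g, band g &
  forall x, h1 x <= (f x)%:E /\ (f x)%:E <= h2 x -> f x = g x.
Proof.
move=> fc; have [_ g0b] := g0band.
pose k := h1 \max ((fun y => (f y)%:E) \min h2).
have kc : continuous k.
  apply: max_fun_continuous => //; apply: min_fun_continuous => //.
  exact: continuous_EFin.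
have kfin y : k y \is a fin_num.
  have [h1g0 g0h2] := g0b y; rewrite fin_numElt /k /= lt_max gt_max gt_min.
  rewrite lt_min ltNyr (lt_le_trans (ltNyr _) g0h2) orbT /=.
  by rewrite (le_lt_trans h1g0 (ltry _)) ltry.
have kE y : (fine (k y))%:E = k y by rewrite fineK.
exists (fine \o k).
  split.
    by move=> y; apply: fine_cvg; rewrite kE; exact: kc.
  move=> y; rewrite kE /k /= le_max lexx ge_max ge_min lexx orbT andbT.
  by have [h1g0 g0h2] := g0b y; rewrite (le_trans h1g0 g0h2).
move=> x [h1f fh2]; apply: EFin_inj; rewrite /= kE /k /=.
by rewrite (min_idPl fh2) (max_idPr h1f).
Qed.

Lemma EG_band F : F `<=` @Cfun R -> EG band F = CL (band_domain F).
Proof.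
move=> FC; apply/seteqP; split => E.
  move=> [cE EF]; split => // x Ex f Ff.
  have [_ [_ [g [_ gb] fg]]] := EF f Ff.
  by rewrite fg //; exact: gb.
move=> [cE sE]; split => // f Ff; split; first exact: FC.
split => //; have [g gb fg] := band_clamp (FC _ Ff).
by exists g => // x /sE /(_ f Ff); exact: fg.
Qed.

Lemma band_KG_CL : KG band `<=` [set CL E | E in [set E : set R | closed E]].
Proof.
move=> _ [F FC ->]; exists (band_domain F); first exact: closed_band_domain.
by rewrite EG_band.
Qed.

End band.

Section sections_of_family.
Context {R : realType}.
Variable G : set (R -> R).
Hypothesis GC : G `<=` @Cfun R.
Local Open Scope ereal_scope.

Definition sections x := [set g x | g in G].

Lemma selection_sections g : G g -> selection sections g.
Proof. by move=> Gg; split; [exact: GC|move=> y; exists g]. Qed.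

Lemma sections_selection_through x s :
  sections x s -> exists2 g, selection sections g & g x = s.
Proof. by move=> [g Gg gx]; exists g => //; exact: selection_sections. Qed.

Lemma sections_vinf_vsup g x : G g ->
  vinf sections x <= (g x)%:E /\ (g x)%:E <= vsup sections x.
Proof.
move=> Gg; split; last by apply: vsup_ge; exists g.
by apply: ereal_inf_lbound; exists (g x) => //; exists g.
Qed.

Lemma EG_set1 f y : continuous f -> EG G [set f] [set y] <-> sections y (f y).
Proof.
have cy := @closed_set1R _ y.
move=> fc; split=> [[_ /(_ f erefl) [_ [_ [g Gg fg]]]]|[g Gg gf]].
  by exists g => //; rewrite fg.
by split=> // _ ->; split=> //; split=> //; exists g => // _ ->.
Qed.

Section KG_closed_sets.
Hypothesis KG_CL : KG G `<=` [set CL E | E in [set E : set R | closed E]].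

Lemma KG_contact f : continuous f -> closed [set y | sections y (f y)] /\
  exists2 g, G g & forall y, sections y (f y) -> f y = g y.
Proof.
move=> fc.
have [E cE EGE] : [set CL E | E in [set E | closed E]] (EG G [set f]).
  by apply: KG_CL; exists [set f] => // _ ->.
have contactE : [set y | sections y (f y)] = E.
  apply/seteqP; split=> y /=.
    by move=> /(EG_set1 y fc); rewrite -EGE => /CL_set1.
  by move=> /CL_set1; rewrite EGE => /(EG_set1 y fc).
have [_ /(_ f erefl) [_ [_ [g Gg fg]]]] : EG G [set f] E by rewrite -EGE; split.
rewrite contactE; split=> //; exists g => // y yE.
by apply: fg; rewrite -contactE.
Qed.

Lemma sections_is_interval x : is_interval (sections x).
Proof.
apply/is_intervalPlt => a b [g1 Gg1 g1x] [g2 Gg2 g2x] c /andP[ac cb].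
apply: contrapT => notc.
have [g1c g2c] := (GC Gg1, GC Gg2).
have near_notc : \forall y \near x, ~ sections y c.
  have : open (~` [set y | sections y c]).
    by apply: closed_openC; exact: (KG_contact (@cst_continuous _ _ c)).1.
  by rewrite openE; apply.
have near_g1c : \forall y \near x, (g1 y < c)%R.
  by apply: cvg_near_lt (g1c x) _; rewrite g1x.
have near_g2c : \forall y \near x, (c < g2 y)%R.
  by apply: cvg_near_gt (g2c x) _; rewrite g2x.
have : \forall y \near x, [/\ ~ sections y c, (g1 y < c)%R & (c < g2 y)%R].
  by near=> y; split; near: y.
move=> /nbhs_ballP[e /= e0 ball_e].
pose p := (x - e / 2)%R; pose q := (x + e / 2)%R.
have pq : (p < q)%R by rewrite /p /q; lra.
have in_ball z : (p <= z <= q)%R -> ball x e z.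
  rewrite /p /q /ball /= => /andP[pz zq].
  by rewrite ltr_norml; apply/andP; split; lra.
(* The member of G matching this interpolation at p and q must cross c. *)
pose f z := (g1 z + (z - p) / (q - p) * (g2 z - g1 z))%R.
have fc : continuous f.
  move=> z; apply: cvgD; first exact: g1c.
  apply: cvgM; last by apply: cvgB; [exact: g2c|exact: g1c].
  by apply: cvgM; [apply: cvgB; [exact: cvg_id|exact: cvg_cst]|exact: cvg_cst].
have [_ [g Gg fg]] := KG_contact fc.
have fp : f p = g1 p by rewrite /f subrr mul0r mul0r addr0.
have fq : f q = g2 q.
  by rewrite /f divff ?subr_eq0 ?gt_eqF // mul1r addrC subrK.
have [ball_p ball_q] : ball x e p /\ ball x e q.
  by split; apply: in_ball; rewrite lexx ?andbT (ltW pq).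
have gp : (g p < c)%R.
  have [_ g1p _] := ball_e p ball_p.
  have fpG : sections p (f p) by rewrite fp; exists g1.
  by rewrite -(fg p fpG) fp.
have gq : (c < g q)%R.
  have [_ _ g2q] := ball_e q ball_q.
  have fqG : sections q (f q) by rewrite fq; exists g2.
  by rewrite -(fg q fqG) fq.
have [z zpq gz] : exists2 z, z \in `[p, q] & g z = c.
  apply: IVT; [exact: ltW|exact: continuous_subspaceT (GC Gg)|].
  by rewrite ge_min le_max (ltW gp) (ltW gq) orbT.
move: zpq; rewrite in_itv /= => /in_ball /ball_e [notc_z _ _].
by apply: notc_z; exists g.
Unshelve. all: by end_near.
Qed.

Lemma admissible_sections : admissible sections.
Proof.
split; [by move=> f /KG_contact[]|exact: sections_is_interval|].
exact: sections_selection_through.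
Qed.

Lemma sections_band g0 : G g0 -> G = band (vinf sections) (vsup sections).
Proof.
move=> Gg0; apply/seteqP; split=> g.
  by move=> Gg; split; [exact: GC|move=> x; exact: sections_vinf_vsup].
move=> [gc gb]; have [_ [g' Gg' gg']] := KG_contact gc.
suff -> : g = g' by [].
apply/funext => y; apply: gg'.
exact: (between_vinf_vsup_mem admissible_sections (selection_sections Gg0)).
Qed.

End KG_closed_sets.
End sections_of_family.

Theorem theorem3p3 (R : realType) (G : set (R -> R))
  (HGC : G `<=` @Cfun R) (HGne : G !=set0) :
  (KG G `<=` [set CL E | E in [set E : set R | closed E]]) <->
  (exists h1 h2 : R -> \bar R,
     continuous h1 /\ continuous h2 /\
     G = [set g : R -> R | continuous g /\
            (forall x, (h1 x <= (g x)%:E)%E /\ ((g x)%:E <= h2 x)%E)]).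
Proof.
have [g0 Gg0] := HGne.
split=> [KG_CL|[h1 [h2 [h1c [h2c eqG]]]]].
  have Gadm := admissible_sections HGC KG_CL.
  have g0sel := selection_sections HGC Gg0.
  exists (vinf (sections G)), (vsup (sections G)).
  split; first exact: vinf_continuous Gadm g0sel.
  split; first exact: vsup_continuous Gadm g0sel.
  exact (sections_band HGC KG_CL Gg0).
rewrite eqG in Gg0 *; exact (band_KG_CL h1c h2c Gg0).
Qed.
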